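(* Let $J=\{i_1,\dots,i_n\}\subset\mathbb N_+$ be finite with $n\ge1$. If $n=2t+1$, then $M_J$ is stably isomorphic as a $\Lambda(Q_1,P)$-module to a direct sum of $2^t$ copies of $\Lambda(Q_1)=\Lambda(Q_1,P)/(P)$. If $n=2t$, then $M_J$ is stably isomorphic to a direct sum of $2^{t-1}$ copies of $M_{[2]}$.
   Context: Over $\mathbb F_2$, $\Lambda(Q_1,P)$ is the exterior algebra on $Q_1,P$, a Hopf algebra with $Q_1$ primitive and $\Delta(P)=P\otimes1+Q_1\otimes Q_1+1\otimes P$. For $i\in\mathbb N_+$, $M_i$ has basis $t_i,x_i$ with $Q_1(x_i)=t_i$, $Q_1(t_i)=0$, $P=0$; for finite $J\subset\mathbb N_+$, $M_J=\bigotimes_{j\in J}M_j$ with the action through the coproduct; $[2]=\{1,2\}$. Two modules $M,N$ are stably isomorphic if $F\oplus M\cong F'\oplus N$ for free $\Lambda(Q_1,P)$-modules $F,F'$. *)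

(* Finite-dimensional modules over Lambda(Q1,P) over F_2,
   represented concretely by matrices acting on ROW vectors (v |-> v *m Q). *)
From HB Require Import structures.
From mathcomp Require Import all_boot all_order all_algebra.
Set Implicit Arguments. Unset Strict Implicit. Unset Printing Implicit Defensive.
Import GRing.Theory.
Local Open Scope ring_scope.

Notation F2 := 'F_2.

Record lmod := LMod { ldim : nat; lQ : 'M[F2]_ldim; lP : 'M[F2]_ldim }.

Definition idx_pair (m n : nat) (k : 'I_(m * n)) : 'I_m * 'I_n :=
  enum_val (cast_ord (esym (mxvec_cast m n)) k).

Definition kron (m1 n1 m2 n2 : nat) (A : 'M[F2]_(m1, n1)) (B : 'M[F2]_(m2, n2))
  : 'M[F2]_(m1 * m2, n1 * n2) :=
  \matrix_(i, j) (A (idx_pair i).1 (idx_pair j).1 * B (idx_pair i).2 (idx_pair j).2).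

(* Tensor product of modules, action through the coproduct
   Delta(Q1) = Q1 (x) 1 + 1 (x) Q1,  Delta(P) = P (x) 1 + Q1 (x) Q1 + 1 (x) P. *)
Definition ltensor (M N : lmod) : lmod :=
  @LMod (ldim M * ldim N)
    (kron (lQ M) 1%:M + kron 1%:M (lQ N))
    (kron (lP M) 1%:M + kron (lQ M) (lQ N) + kron 1%:M (lP N)).

Definition ldsum (M N : lmod) : lmod :=
  @LMod (ldim M + ldim N) (block_mx (lQ M) 0 0 (lQ N)) (block_mx (lP M) 0 0 (lP N)).

Definition lzero : lmod := @LMod 0 0 0.
Fixpoint lnsum (k : nat) (M : lmod) : lmod :=
  if k is k'.+1 then ldsum M (lnsum k' M) else lzero.

Definition lunit : lmod := @LMod 1 0 0.

Definition Qmat2 : 'M[F2]_2 := \matrix_(i, j) (if (i == 1 :> nat) && (j == 0 :> nat) then 1 else 0).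

(* M_i : basis (t_i, x_i), Q1 x_i = t_i, Q1 t_i = 0, P = 0. (Independent of i.) *)
Definition Mi (i : nat) : lmod := @LMod 2 Qmat2 0.

(* M_J = tensor product of the M_j, j in J (J given as a duplicate-free list). *)
Definition MJ (J : seq nat) : lmod := foldr (fun j M => ltensor (Mi j) M) lunit J.

(* Lambda(Q1) = Lambda(Q1,P)/(P): basis (1, Q1), P acting as 0. *)
Definition LamQ1 : lmod := @LMod 2 Qmat2 0.

(* The free module of rank one Lambda(Q1,P), basis (1, Q1, P, Q1 P). *)
Definition LamFree : lmod :=
  @LMod 4
    (\matrix_(i, j) (if ((i == 0 :> nat) && (j == 1 :> nat)) || ((i == 2 :> nat) && (j == 3 :> nat)) then 1 else 0))
    (\matrix_(i, j) (if ((i == 0 :> nat) && (j == 2 :> nat)) || ((i == 1 :> nat) && (j == 3 :> nat)) then 1 else 0)).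

Definition liso (M N : lmod) : Prop :=
  exists (A : 'M[F2]_(ldim M, ldim N)) (B : 'M[F2]_(ldim N, ldim M)),
    [/\ A *m B = 1%:M, B *m A = 1%:M, lQ M *m A = A *m lQ N & lP M *m A = A *m lP N].

(* Free modules are finite direct sums of copies of Lambda(Q1,P). *)
Definition stably_iso (M N : lmod) : Prop :=
  exists a b : nat, liso (ldsum (lnsum a LamFree) M) (ldsum (lnsum b LamFree) N).

From mathcomp Require Import all_boot all_order all_algebra.
Set Implicit Arguments. Unset Strict Implicit. Unset Printing Implicit Defensive.
Import GRing.Theory.
Local Open Scope ring_scope.

(* All M_i are the same module M, so M_J depends only on n = |J|; write M^n
   for it.  Stable isomorphism is an equivalence compatible with direct sums
   and with M (x) -, because M (x) Lambda(Q1,P) is free.  Two finite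
   computations, M^1 = Lambda(Q1) and M^3 = Lambda(Q1,P) + 2 M^1, give
   M^(n+2) = free + 2 M^n for n = 1, 2 (the case n = 2 by tensoring the first
   with M), hence M^(n+2k) ~ 2^k M^n by induction on k. *)

Notation lfree a := (lnsum a LamFree).

Lemma liso_refl M : liso M M.
Proof. by exists 1%:M, 1%:M; rewrite !mul1mx !mulmx1. Qed.

Lemma mulmx_intertwine_inv m n (A : 'M[F2]_(m, n)) (B : 'M[F2]_(n, m)) X Y :
  A *m B = 1%:M -> B *m A = 1%:M -> X *m A = A *m Y -> Y *m B = B *m X.
Proof.
move=> AB BA XA.
have -> : Y *m B = B *m (A *m Y) *m B by rewrite mulmxA BA mul1mx.
by rewrite -XA !mulmxA -(mulmxA _ A B) AB mulmx1.
Qed.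

Lemma liso_sym M N : liso M N -> liso N M.
Proof.
case=> A [B [AB BA HQ HP]]; exists B, A; split=> //.
- exact: mulmx_intertwine_inv AB BA HQ.
- exact: mulmx_intertwine_inv AB BA HP.
Qed.

Lemma liso_trans M N K : liso M N -> liso N K -> liso M K.
Proof.
case=> A [B [AB BA HQ HP]] [A' [B' [AB' BA' HQ' HP']]].
exists (A *m A'), (B' *m B); split.
- by rewrite mulmxA -(mulmxA A) AB' mulmx1 AB.
- by rewrite mulmxA -(mulmxA B') BA mulmx1 BA'.
- by rewrite mulmxA HQ -mulmxA HQ' mulmxA.
- by rewrite mulmxA HP -mulmxA HP' mulmxA.
Qed.

Definition fun_mx m n (f : 'I_m -> 'I_n) : 'M[F2]_(m, n) := \matrix_(i, j) (f i == j)%:R.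

Lemma mul_fun_mx m n p (f : 'I_m -> 'I_n) (X : 'M[F2]_(n, p)) :
  fun_mx f *m X = \matrix_(i, j) X (f i) j.
Proof.
apply/matrixP=> i j; rewrite !mxE (bigD1 (f i)) //= !mxE eqxx mul1r big1 ?addr0 //.
by move=> k; rewrite mxE eq_sym => /negbTE ->; rewrite mul0r.
Qed.

Lemma mulmx_fun_mx m n p (f : 'I_n -> 'I_p) (g : 'I_p -> 'I_n) (X : 'M[F2]_(m, n)) :
  cancel f g -> cancel g f -> X *m fun_mx f = \matrix_(i, j) X i (g j).
Proof.
move=> fK gK; apply/matrixP=> i j.
rewrite !mxE (bigD1 (g j)) //= !mxE gK eqxx mulr1 big1 ?addr0 //.
move=> k; rewrite mxE => Hk; case: eqP => [E|]; last by rewrite mulr0.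
by move: Hk; rewrite -E fK eqxx.
Qed.

Lemma liso_reindex (M N : lmod) (f : 'I_(ldim M) -> 'I_(ldim N)) (g : 'I_(ldim N) -> 'I_(ldim M)) :
  cancel f g -> cancel g f ->
  (forall i k, lQ M i k = lQ N (f i) (f k)) -> (forall i k, lP M i k = lP N (f i) (f k)) ->
  liso M N.
Proof.
move=> fK gK HQ HP; exists (fun_mx f), (fun_mx g); split.
- by rewrite mul_fun_mx; apply/matrixP=> i j; rewrite !mxE fK.
- by rewrite mul_fun_mx; apply/matrixP=> i j; rewrite !mxE gK.
- by rewrite (mulmx_fun_mx _ fK gK) mul_fun_mx; apply/matrixP=> i j; rewrite !mxE HQ gK.
- by rewrite (mulmx_fun_mx _ fK gK) mul_fun_mx; apply/matrixP=> i j; rewrite !mxE HP gK.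
Qed.

Lemma split_lshift m n (a : 'I_m) : split (lshift n a) = inl a.
Proof. exact: (unsplitK (inl _ a)). Qed.
Lemma split_rshift m n (b : 'I_n) : split (rshift m b) = inr b.
Proof. exact: (unsplitK (inr _ b)). Qed.

Ltac block_simpl :=
  do 3 rewrite /= ?split_lshift ?split_rshift /=;
  rewrite ?(block_mxEul, block_mxEur, block_mxEdl, block_mxEdr) ?mxE //.

Lemma liso_dsum X X' Y Y' : liso X X' -> liso Y Y' -> liso (ldsum X Y) (ldsum X' Y').
Proof.
case=> A [B [AB BA HQ HP]] [A' [B' [AB' BA' HQ' HP']]].
exists (block_mx A 0 0 A'), (block_mx B 0 0 B'); split;
  rewrite /= !mulmx_block !mulmx0 !mul0mx !addr0 !add0r //.
- by rewrite AB AB' -scalar_mx_block.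
- by rewrite BA BA' -scalar_mx_block.
- by rewrite HQ HQ'.
- by rewrite HP HP'.
Qed.

Lemma liso_dsumC X Y : liso (ldsum X Y) (ldsum Y X).
Proof.
apply: (@liso_reindex (ldsum X Y) (ldsum Y X)
  (fun i => match split i with inl a => rshift (ldim Y) a | inr b => lshift (ldim X) b end)
  (fun i => match split i with inl a => rshift (ldim X) a | inr b => lshift (ldim Y) b end)).
- by move=> i; case: (split_ordP i) => a ->; block_simpl.
- by move=> i; case: (split_ordP i) => a ->; block_simpl.
- by move=> i k; case: (split_ordP i) => a ->; case: (split_ordP k) => b ->; block_simpl.
- by move=> i k; case: (split_ordP i) => a ->; case: (split_ordP k) => b ->; block_simpl.
Qed.

Lemma liso_dsumA X Y Z : liso (ldsum X (ldsum Y Z)) (ldsum (ldsum X Y) Z).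
Proof.
apply: (@liso_reindex (ldsum X (ldsum Y Z)) (ldsum (ldsum X Y) Z)
  (fun i => match split i with
    | inl a => lshift (ldim Z) (lshift (ldim Y) a)
    | inr bc => match split bc with
      | inl b => lshift (ldim Z) (rshift (ldim X) b)
      | inr c => rshift (ldim X + ldim Y) c end end)
  (fun i => match split i with
    | inl ab => match split ab with
      | inl a => lshift (ldim Y + ldim Z) a
      | inr b => rshift (ldim X) (lshift (ldim Z) b) end
    | inr c => rshift (ldim X) (rshift (ldim Y) c) end)).
- move=> i; case: (split_ordP i) => a ->; block_simpl.
  by case: (split_ordP a) => b ->; block_simpl.
- move=> i; case: (split_ordP i) => a ->; block_simpl.
  by case: (split_ordP a) => b ->; block_simpl.
- move=> i k; case: (split_ordP i) => [a ->|bc ->]; [|case: (split_ordP bc) => [b ->|c ->]];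
  case: (split_ordP k) => [a' ->|bc' ->]; try case: (split_ordP bc') => [b' ->|c' ->];
  block_simpl.
- move=> i k; case: (split_ordP i) => [a ->|bc ->]; [|case: (split_ordP bc) => [b ->|c ->]];
  case: (split_ordP k) => [a' ->|bc' ->]; try case: (split_ordP bc') => [b' ->|c' ->];
  block_simpl.
Qed.

Lemma liso_dsum0r X : liso (ldsum X lzero) X.
Proof.
have castK (a : 'I_(ldim X)) : cast_ord (addn0 _) (lshift 0 a) = a by apply: val_inj.
apply: (@liso_reindex (ldsum X lzero) X
  (cast_ord (addn0 (ldim X))) (cast_ord (esym (addn0 (ldim X))))).
- exact: cast_ordK.
- exact: cast_ordKV.
- move=> i k; case: (split_ordP i) => a ->; last by case: a.
  by case: (split_ordP k) => b ->; [rewrite !castK; block_simpl | case: b].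
- move=> i k; case: (split_ordP i) => a ->; last by case: a.
  by case: (split_ordP k) => b ->; [rewrite !castK; block_simpl | case: b].
Qed.

Lemma liso_dsum0l X : liso (ldsum lzero X) X.
Proof. exact: liso_trans (liso_dsumC _ _) (liso_dsum0r _). Qed.

Lemma liso_dsumCA X Y Z : liso (ldsum X (ldsum Y Z)) (ldsum Y (ldsum X Z)).
Proof.
apply: liso_trans (liso_dsumA _ _ _) _.
apply: liso_trans _ (liso_sym (liso_dsumA _ _ _)).
exact: liso_dsum (liso_dsumC _ _) (liso_refl _).
Qed.

Lemma liso_dsumACA X Y Z W :
  liso (ldsum (ldsum X Y) (ldsum Z W)) (ldsum (ldsum X Z) (ldsum Y W)).
Proof.
apply: liso_trans (liso_sym (liso_dsumA _ _ _)) _.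
apply: liso_trans _ (liso_dsumA _ _ _).
exact: liso_dsum (liso_refl _) (liso_dsumCA _ _ _).
Qed.

(** * Tensor products *)

Definition pair_idx m n (p : 'I_m * 'I_n) : 'I_(m * n) :=
  cast_ord (mxvec_cast m n) (enum_rank p).

Lemma idx_pairK m n : cancel (@idx_pair m n) (@pair_idx m n).
Proof. by move=> k; rewrite /pair_idx /idx_pair enum_valK cast_ordKV. Qed.
Lemma pair_idxK m n : cancel (@pair_idx m n) (@idx_pair m n).
Proof. by move=> p; rewrite /pair_idx /idx_pair cast_ordK enum_rankK. Qed.

Lemma nth_allpairs_iota (n : nat) : forall (m a k : nat), (k < m * n)%N ->
  nth (0%N, 0%N) [seq (x, y) | x <- iota a m, y <- iota 0 n] k = (a + k %/ n, k %% n)%N.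
Proof.
elim=> [|m IH] a k; first by rewrite mul0n.
rewrite mulSn /= => Hk.
rewrite nth_cat size_map size_iota.
case: ltnP => Hkn.
  rewrite (nth_map 0%N) ?size_iota // nth_iota // add0n.
  by rewrite divn_small // modn_small // addn0.
have n0 : (0 < n)%N by move: Hk; case: (n) => //; rewrite muln0.
rewrite IH; last by rewrite -(ltn_add2l n) subnKC.
rewrite -{3 4}(subnKC Hkn) modnDl.
have -> : ((n + (k - n)) %/ n = 1 + (k - n) %/ n)%N by rewrite -divnMDl // mul1n.
by rewrite addSnnS add1n.
Qed.

Lemma idx_pairE m n (k : 'I_(m * n)) :
  val (idx_pair k).1 = (k %/ n)%N /\ val (idx_pair k).2 = (k %% n)%N.
Proof.
have Henum : map (fun p : 'I_m * 'I_n => (val p.1, val p.2)) (enum {: 'I_m * 'I_n})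
   = [seq (x, y) | x <- iota 0 m, y <- iota 0 n].
  rewrite enumT unlock /= /prod_enum -!val_enum_ord.
  elim: (enum 'I_m) => //= x s IHs.
  by rewrite map_cat IHs -!map_comp.
have Hsz : (val k < size (enum {: 'I_m * 'I_n}))%N.
  rewrite -(size_map (fun p : 'I_m * 'I_n => (val p.1, val p.2))) Henum.
  by rewrite size_allpairs !size_iota ltn_ord.
rewrite /idx_pair /enum_val /=.
set x0 := enum_default _.
have := congr1 (fun s => nth (val x0.1, val x0.2) s k) Henum.
rewrite /= (nth_map x0) // (set_nth_default (0%N, 0%N)) ?size_allpairs ?size_iota ?ltn_ord //.
by rewrite nth_allpairs_iota ?ltn_ord // => -[-> ->].
Qed.

Lemma kronE m1 n1 m2 n2 (A : 'M[F2]_(m1, n1)) (B : 'M[F2]_(m2, n2)) a b c d :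
  kron A B (pair_idx (a, b)) (pair_idx (c, d)) = A a c * B b d.
Proof. by rewrite mxE !pair_idxK. Qed.

Lemma mulmx_kron m1 n1 p1 m2 n2 p2 (A : 'M[F2]_(m1, n1)) (B : 'M[F2]_(m2, n2))
  (C : 'M[F2]_(n1, p1)) (D : 'M[F2]_(n2, p2)) :
  kron A B *m kron C D = kron (A *m C) (B *m D).
Proof.
apply/matrixP=> i j; rewrite !mxE.
rewrite (reindex (@pair_idx n1 n2)) /=; last first.
  by exists (@idx_pair n1 n2) => k _; rewrite ?pair_idxK ?idx_pairK.
rewrite mulr_suml; under [RHS]eq_bigr do rewrite mulr_sumr.
rewrite pair_big /=; apply: eq_bigr => -[a b] _ /=.
by rewrite !mxE !pair_idxK /= mulrACA.
Qed.

Lemma kron1 m n : kron (1%:M : 'M[F2]_m) (1%:M : 'M[F2]_n) = 1%:M.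
Proof.
apply/matrixP=> i j.
rewrite -(idx_pairK i) -(idx_pairK j); case: (idx_pair i) => a b; case: (idx_pair j) => c d.
rewrite kronE !mxE (can_eq (@pair_idxK m n)) xpair_eqE.
by case: (a == c); case: (b == d); rewrite /= ?mulr1n ?mulr0n ?mulr1 ?mulr0.
Qed.

Lemma liso_tensorr Z X Y : liso X Y -> liso (ltensor Z X) (ltensor Z Y).
Proof.
case=> A [B [AB BA HQ HP]].
exists (kron 1%:M A), (kron 1%:M B); split=> /=.
- by rewrite mulmx_kron mul1mx AB kron1.
- by rewrite mulmx_kron mul1mx BA kron1.
- by rewrite mulmxDl mulmxDr !mulmx_kron !mul1mx !mulmx1 HQ.
- by rewrite !mulmxDl !mulmxDr !mulmx_kron !mul1mx !mulmx1 HQ HP.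
Qed.

Ltac tensor_simpl :=
  do 4 rewrite /= ?pair_idxK ?split_lshift ?split_rshift
    ?(block_mxEul, block_mxEur, block_mxEdl, block_mxEdr) ?mxE /=;
  rewrite ?pair_idxK ?eq_lshift ?eq_rshift ?eq_lrshift ?eq_rlshift /= ?mulr0n ?mulr1n
    ?mulr0 ?mul0r ?addr0 ?add0r ?mulr1 ?mul1r.

Lemma liso_tensorDr Z X Y : liso (ltensor Z (ldsum X Y)) (ldsum (ltensor Z X) (ltensor Z Y)).
Proof.
apply: (@liso_reindex (ltensor Z (ldsum X Y)) (ldsum (ltensor Z X) (ltensor Z Y))
  (fun k => match split (idx_pair k).2 with
     | inl a => lshift (ldim Z * ldim Y) (pair_idx ((idx_pair k).1, a))
     | inr b => rshift (ldim Z * ldim X) (pair_idx ((idx_pair k).1, b)) end)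
  (fun l => match split l with
     | inl u => pair_idx ((idx_pair u).1, lshift (ldim Y) (idx_pair u).2)
     | inr v => pair_idx ((idx_pair v).1, rshift (ldim X) (idx_pair v).2) end)).
- move=> k; rewrite -(idx_pairK k); case: (idx_pair k) => c d.
  by case: (split_ordP d) => a ->; rewrite /= ?pair_idxK ?split_lshift ?split_rshift /= pair_idxK.
- move=> l; case: (split_ordP l) => u ->;
    rewrite /= ?split_lshift ?split_rshift /= pair_idxK /= ?split_lshift ?split_rshift;
    by rewrite -{3}(idx_pairK u); case: (idx_pair u).
- move=> k l; rewrite -(idx_pairK k) -(idx_pairK l).
  case: (idx_pair k) => c d; case: (idx_pair l) => c' d'.
  by case: (split_ordP d) => a ->; case: (split_ordP d') => a' ->; tensor_simpl.
- move=> k l; rewrite -(idx_pairK k) -(idx_pairK l).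
  case: (idx_pair k) => c d; case: (idx_pair l) => c' d'.
  by case: (split_ordP d) => a ->; case: (split_ordP d') => a' ->; tensor_simpl.
Qed.

Lemma liso_tensor0r Z : liso (ltensor Z lzero) lzero.
Proof.
have empty_mx m n (A B : 'M[F2]_(m, n)) : m = 0%N -> A = B.
  by move=> m0; apply/matrixP=> i; have := ltn_ord i; rewrite {2}m0.
by exists 0, 0; split; apply: empty_mx; rewrite /= ?muln0.
Qed.

Lemma liso_nsum k X Y : liso X Y -> liso (lnsum k X) (lnsum k Y).
Proof.
move=> XY; elim: k => [|k IHk] /=; first exact: liso_refl.
exact: liso_dsum XY IHk.
Qed.

Lemma liso_tensor_nsum Z X k : liso (ltensor Z (lnsum k X)) (lnsum k (ltensor Z X)).
Proof.
elim: k => [|k IHk] /=; first exact: liso_tensor0r.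
exact: liso_trans (liso_tensorDr _ _ _) (liso_dsum (liso_refl _) IHk).
Qed.

Lemma lnsumD X a b : liso (lnsum (a + b) X) (ldsum (lnsum a X) (lnsum b X)).
Proof.
elim: a => [|a IHa]; first exact: liso_sym (liso_dsum0l _).
rewrite addSn /=.
exact: liso_trans (liso_dsum (liso_refl _) IHa) (liso_dsumA _ _ _).
Qed.

Lemma lnsum_dsum X Y k : liso (lnsum k (ldsum X Y)) (ldsum (lnsum k X) (lnsum k Y)).
Proof.
elim: k => [|k IHk] /=; first exact: liso_sym (liso_dsum0l _).
exact: liso_trans (liso_dsum (liso_refl _) IHk) (liso_dsumACA _ _ _ _).
Qed.

Lemma lnsumM X k j : liso (lnsum k (lnsum j X)) (lnsum (k * j) X).
Proof.
elim: k => [|k IHk] /=; first exact: liso_refl.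
rewrite mulSn.
exact: liso_trans (liso_dsum (liso_refl _) IHk) (liso_sym (lnsumD _ _ _)).
Qed.

(** * Certificates over F_2 *)

(* Writing the entries of every matrix as a boolean function of the indices
   turns each of the four identities in [liso] into a finite boolean check,
   which is then decided by evaluation. *)
Definition bool_mx m n (f : nat -> nat -> bool) : 'M[F2]_(m, n) := \matrix_(i, j) (f i j)%:R.
Definition xorsum n (h : nat -> bool) := foldr (fun k b => xorb (h k) b) false (iota 0 n).

Lemma natr_xorb_F2 (a b : bool) : a%:R + b%:R = (xorb a b)%:R :> F2.
Proof. by case: a; case: b; rewrite ?addr0 ?add0r //; apply/eqP. Qed.

Lemma bool_mx0 m n : (0 : 'M[F2]_(m, n)) = bool_mx m n (fun _ _ => false).
Proof. by apply/matrixP=> i j; rewrite !mxE. Qed.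
Lemma bool_mx1 n : (1%:M : 'M[F2]_n) = bool_mx n n (fun i j => i == j).
Proof. by apply/matrixP=> i j; rewrite !mxE. Qed.
Lemma bool_mxD m n f g :
  bool_mx m n f + bool_mx m n g = bool_mx m n (fun i j => xorb (f i j) (g i j)).
Proof. by apply/matrixP=> i j; rewrite !mxE natr_xorb_F2. Qed.
Lemma bool_mxM m n p f g :
  bool_mx m n f *m bool_mx n p g = bool_mx m p (fun i j => xorsum n (fun k => f i k && g k j)).
Proof.
apply/matrixP=> i j; rewrite !mxE.
under eq_bigr do rewrite !mxE -natrM mulnb.
rewrite -(big_mkord xpredT (fun k => (f i k && g k j)%:R)) /xorsum /index_iota subn0.
elim: (iota 0 n) => [|k s IH]; first by rewrite big_nil.
by rewrite big_cons IH natr_xorb_F2.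
Qed.

Lemma bool_mx_block m1 m2 n1 n2 a b c d :
  block_mx (bool_mx m1 n1 a) (bool_mx m1 n2 b) (bool_mx m2 n1 c) (bool_mx m2 n2 d) =
  bool_mx (m1 + m2) (n1 + n2) (fun i j =>
    if (i < m1)%N then (if (j < n1)%N then a i j else b i (j - n1)%N)
    else (if (j < n1)%N then c (i - m1)%N j else d (i - m1)%N (j - n1)%N)).
Proof.
apply/matrixP=> i j; rewrite [RHS]mxE.
case: (split_ordP i) => i' ->; case: (split_ordP j) => j' ->;
  by rewrite ?(block_mxEul, block_mxEur, block_mxEdl, block_mxEdr) mxE /=
       ?ltn_ord ?ltnNge ?leq_addr /= ?addKn.
Qed.

Lemma bool_mx_kron m1 n1 m2 n2 a b :
  kron (bool_mx m1 n1 a) (bool_mx m2 n2 b) =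
  bool_mx (m1 * m2) (n1 * n2) (fun i j => a (i %/ m2)%N (j %/ n2)%N && b (i %% m2)%N (j %% n2)%N).
Proof.
apply/matrixP=> i j; rewrite !mxE -natrM mulnb.
by case: (idx_pairE i) => -> ->; case: (idx_pairE j) => -> ->.
Qed.

Definition eq_on_box m n (f g : nat -> nat -> bool) :=
  all (fun i => all (fun j => f i j == g i j) (iota 0 n)) (iota 0 m).

Lemma bool_mx_eq m n f g : eq_on_box m n f g -> bool_mx m n f = bool_mx m n g.
Proof.
move=> /allP Hfg; apply/matrixP=> i j; rewrite !mxE.
have Hi : (val i \in iota 0 m) by rewrite mem_iota ltn_ord.
have Hj : (val j \in iota 0 n) by rewrite mem_iota ltn_ord.
by move: (Hfg _ Hi) => /allP /(_ _ Hj) /eqP ->.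
Qed.

Definition seq_mx m n (s : seq (seq nat)) : 'M[F2]_(m, n) :=
  bool_mx m n (fun i j => nth 0%N (nth [::] s i) j == 1%N).

Lemma Qmat2E : Qmat2 = bool_mx 2 2 (fun i j => (i == 1)%N && (j == 0)%N).
Proof. by apply/matrixP=> i j; rewrite !mxE; case: ifP. Qed.

(* Stated for the unfolded matrices, since [/=] unfolds [LamFree]. *)
Lemma LamFreeQE :
  (\matrix_(i, j) (if ((i == 0 :> nat) && (j == 1 :> nat))
                        || ((i == 2 :> nat) && (j == 3 :> nat)) then 1 else 0) : 'M[F2]_4)
  = bool_mx 4 4 (fun i j => ((i == 0)%N && (j == 1)%N) || ((i == 2)%N && (j == 3)%N)).
Proof. by apply/matrixP=> i j; rewrite !mxE; case: ifP. Qed.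
Lemma LamFreePE :
  (\matrix_(i, j) (if ((i == 0 :> nat) && (j == 2 :> nat))
                        || ((i == 1 :> nat) && (j == 3 :> nat)) then 1 else 0) : 'M[F2]_4)
  = bool_mx 4 4 (fun i j => ((i == 0)%N && (j == 2)%N) || ((i == 1)%N && (j == 3)%N)).
Proof. by apply/matrixP=> i j; rewrite !mxE; case: ifP. Qed.

Ltac liso_by_certificate A B :=
  exists A, B; rewrite /= ?LamFreeQE ?LamFreePE ?Qmat2E; split;
  rewrite ?(bool_mx0, bool_mx1, bool_mxD, bool_mxM, bool_mx_block, bool_mx_kron);
  apply: bool_mx_eq; vm_compute; reflexivity.

Lemma liso_tensor_LamFree i : liso (ltensor (Mi i) LamFree) (lfree 2).
Proof.
liso_by_certificate
  (seq_mx 8 8 [:: [:: 0; 0; 1; 0; 1; 0; 0; 0]; [:: 0; 0; 0; 1; 0; 1; 0; 0];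
                  [:: 0; 0; 0; 0; 0; 0; 1; 0]; [:: 0; 0; 0; 0; 0; 0; 0; 1];
                  [:: 1; 0; 1; 0; 0; 1; 0; 1]; [:: 0; 1; 1; 1; 1; 0; 0; 0];
                  [:: 0; 0; 1; 1; 0; 1; 0; 1]; [:: 0; 0; 0; 1; 0; 0; 1; 0]])
  (seq_mx 8 8 [:: [:: 0; 0; 1; 0; 1; 0; 1; 1]; [:: 1; 0; 1; 0; 0; 1; 0; 1];
                  [:: 0; 1; 0; 1; 0; 0; 1; 0]; [:: 0; 0; 1; 0; 0; 0; 0; 1];
                  [:: 1; 1; 0; 1; 0; 0; 1; 0]; [:: 0; 1; 1; 0; 0; 0; 0; 1];
                  [:: 0; 0; 1; 0; 0; 0; 0; 0]; [:: 0; 0; 0; 1; 0; 0; 0; 0]]).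
Qed.

Definition Mpow n := MJ (nseq n 1%N).

Lemma MJ_Mpow J : MJ J = Mpow (size J).
Proof. by elim: J => //= j J ->. Qed.

Lemma Mpow1_LamQ1 : liso (Mpow 1) LamQ1.
Proof. liso_by_certificate (1%:M : 'M[F2]_2) (1%:M : 'M[F2]_2). Qed.

Lemma Mpow3_dsum : liso (Mpow 3) (ldsum (lfree 1) (lnsum 2 (Mpow 1))).
Proof.
liso_by_certificate
  (seq_mx 8 8 [:: [:: 0; 0; 0; 1; 0; 0; 0; 0]; [:: 0; 0; 1; 0; 1; 0; 1; 0];
                  [:: 0; 0; 1; 1; 0; 0; 1; 0]; [:: 0; 1; 1; 0; 1; 1; 0; 0];
                  [:: 0; 0; 1; 1; 1; 0; 0; 0]; [:: 0; 1; 1; 0; 0; 0; 1; 1];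
                  [:: 0; 1; 0; 0; 0; 1; 1; 1]; [:: 1; 0; 0; 0; 1; 1; 0; 0]])
  (seq_mx 8 8 [:: [:: 1; 0; 0; 0; 1; 1; 1; 1]; [:: 1; 1; 1; 1; 0; 1; 1; 0];
                  [:: 0; 1; 1; 0; 1; 0; 0; 0]; [:: 1; 0; 0; 0; 0; 0; 0; 0];
                  [:: 1; 1; 1; 0; 0; 0; 0; 0]; [:: 0; 1; 1; 0; 1; 1; 1; 0];
                  [:: 1; 1; 0; 0; 1; 0; 0; 0]; [:: 0; 1; 0; 1; 0; 0; 1; 0]]).
Qed.

(** * Stable isomorphism *)

Lemma liso_nsum_dsum_free k a X :
  liso (lnsum k (ldsum (lfree a) X)) (ldsum (lfree (k * a)) (lnsum k X)).
Proof. exact: liso_trans (lnsum_dsum _ _ _) (liso_dsum (lnsumM _ _ _) (liso_refl _)). Qed.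

Lemma liso_tensor_dsum_free i a X :
  liso (ltensor (Mi i) (ldsum (lfree a) X)) (ldsum (lfree (a * 2)) (ltensor (Mi i) X)).
Proof.
apply: liso_trans (liso_tensorDr _ _ _) (liso_dsum _ (liso_refl _)).
apply: liso_trans (liso_tensor_nsum _ _ _) _.
exact: liso_trans (liso_nsum _ (liso_tensor_LamFree i)) (lnsumM _ _ _).
Qed.

Lemma liso_dsum_nsumD a b X Y :
  liso (ldsum (lnsum (a + b) X) Y) (ldsum (lnsum a X) (ldsum (lnsum b X) Y)).
Proof.
exact: liso_trans (liso_dsum (lnsumD _ _ _) (liso_refl _)) (liso_sym (liso_dsumA _ _ _)).
Qed.

Lemma stably_iso_liso X Y : liso X Y -> stably_iso X Y.
Proof. by exists 0%N, 0%N; apply: liso_dsum (liso_refl _) _. Qed.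

Lemma stably_iso_trans X Y Z : stably_iso X Y -> stably_iso Y Z -> stably_iso X Z.
Proof.
case=> a [b XY] [c [d YZ]]; exists (c + a)%N, (b + d)%N.
apply: liso_trans (liso_dsum_nsumD _ _ _ _) _.
apply: liso_trans (liso_dsum (liso_refl _) XY) _.
apply: liso_trans (liso_dsumCA _ _ _) _.
apply: liso_trans (liso_dsum (liso_refl _) YZ) _.
exact: liso_sym (liso_dsum_nsumD _ _ _ _).
Qed.

Lemma stably_iso_dsum_free c X : stably_iso (ldsum (lfree c) X) X.
Proof. by exists 0%N, c; apply: liso_dsum0l. Qed.

Lemma stably_iso_nsum k X Y : stably_iso X Y -> stably_iso (lnsum k X) (lnsum k Y).
Proof.
case=> a [b XY]; exists (k * a)%N, (k * b)%N.
apply: liso_trans (liso_sym (liso_nsum_dsum_free _ _ _)) _.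
exact: liso_trans (liso_nsum _ XY) (liso_nsum_dsum_free _ _ _).
Qed.

Lemma stably_iso_tensor i X Y :
  stably_iso X Y -> stably_iso (ltensor (Mi i) X) (ltensor (Mi i) Y).
Proof.
case=> a [b XY]; exists (a * 2)%N, (b * 2)%N.
apply: liso_trans (liso_sym (liso_tensor_dsum_free _ _ _)) _.
exact: liso_trans (liso_tensorr _ XY) (liso_tensor_dsum_free _ _ _).
Qed.

Lemma Mpow4_dsum : liso (Mpow 4) (ldsum (lfree 2) (lnsum 2 (Mpow 2))).
Proof.
apply: liso_trans (liso_tensorr _ Mpow3_dsum) _.
apply: liso_trans (liso_tensor_dsum_free _ _ _) (liso_dsum (liso_refl _) _).
exact: liso_tensor_nsum.
Qed.

Lemma stably_iso_Mpow_periodic p c :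
  liso (Mpow p.+2) (ldsum (lfree c) (lnsum 2 (Mpow p))) ->
  forall k, stably_iso (Mpow (p + k.*2)) (lnsum (2 ^ k) (Mpow p)).
Proof.
move=> Mpow_p2; elim=> [|k IHk].
  by rewrite addn0; apply/stably_iso_liso/liso_sym/liso_dsum0r.
rewrite doubleS !addnS expnSr.
apply: stably_iso_trans (stably_iso_tensor _ (stably_iso_tensor _ IHk)) _.
apply: stably_iso_trans (stably_iso_liso (liso_tensorr _ (liso_tensor_nsum _ _ _))) _.
apply: stably_iso_trans (stably_iso_liso (liso_tensor_nsum _ _ _)) _.
apply: stably_iso_trans (stably_iso_liso (liso_nsum _ Mpow_p2)) _.
apply: stably_iso_trans (stably_iso_nsum _ (stably_iso_dsum_free _ _)) _.
exact/stably_iso_liso/lnsumM.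
Qed.

Theorem mainTheorem8 (J : seq nat) :
  uniq J -> all (fun i => 0 < i)%N J -> (0 < size J)%N ->
  (forall t : nat, size J = t.*2.+1 -> stably_iso (MJ J) (lnsum (2 ^ t) LamQ1)) /\
  (forall t : nat, size J = t.*2 -> stably_iso (MJ J) (lnsum (2 ^ t.-1) (MJ [:: 1; 2]%N))).
Proof.
move=> _ _ size_gt0; rewrite !MJ_Mpow; split=> t size_J; rewrite size_J.
  have := stably_iso_Mpow_periodic Mpow3_dsum t; rewrite add1n => Mpow_odd.
  exact: stably_iso_trans Mpow_odd (stably_iso_liso (liso_nsum _ Mpow1_LamQ1)).
case: t size_J => [|s] size_J; first by rewrite size_J in size_gt0.
by have := stably_iso_Mpow_periodic Mpow4_dsum s; rewrite add2n -doubleS.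
Qed.
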